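(* Let $P_X$, $P_{Y|X}$ and $Q_Y$ be such that $P_{Y|X}(\cdot|x)\ll Q_Y$ for $P_X$-almost all $x$, let $(X,Y)\sim P_XP_{Y|X}$, and let $J\in\mathbb{Z}_{>0}$ have conditional distribution $J\,|\,\{X=x,Y=y\}\sim \mathrm{Geom}\big((\tfrac{\mathrm{d}P_{Y|X}(\cdot|x)}{\mathrm{d}Q_Y}(y)+1)^{-1}\big)$. Then $$\mathbb{E}[\log J]\le \mathbb{E}\big[D_{\mathrm{KL}}(P_{Y|X}(\cdot|X)\Vert Q_Y)\big]+1.$$
   Context: $\mathrm{Geom}(p)$ denotes the geometric distribution on $\{1,2,\ldots\}$ with $\mathbb{P}(J=k)=(1-p)^{k-1}p$. Logarithms are base 2; $D_{\mathrm{KL}}$ is in bits. *)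

From HB Require Import structures.
From mathcomp Require Import all_boot all_order all_algebra.
From mathcomp Require Import all_classical all_reals all_analysis.
Set Implicit Arguments. Unset Strict Implicit. Unset Printing Implicit Defensive.
Import Order.TTheory GRing.Theory Num.Theory.
Local Open Scope ring_scope.
Local Open Scope ereal_scope.

Definition log2 {R : realType} (x : R) : R := (ln x / ln 2)%R.

(* E[log2 J] for J ~ Geom(p) on {1,2,...}, P(J = k) = (1-p)^(k-1) p *)
Definition geom_Elog {R : realType} (p : R) : \bar R :=
  \sum_(1 <= k <oo) (((1 - p) ^+ k.-1 * p * log2 k%:R)%R)%:E.

(* KL divergence D(P || Q) in bits, for P << Q with density g = dP/dQ:
   D(P||Q) = \int g log2 g dQ  (with 0 log 0 = 0) *)
Definition KL_dens {d} {U : measurableType d} {R : realType}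
  (Q : {measure set U -> \bar R}) (g : U -> R) : \bar R :=
  \int[Q]_y ((g y * log2 (g y))%R)%:E.

(* For J ~ Geom(p) the tangent bound ln k <= ln (1/p) + k p - 1, averaged
   over k, gives E[log J] <= log (1/p); with p = 1/(f + 1), where f is the
   density of P_{Y|X=x} w.r.t. Q_Y, the conditional expectation of log J is
   thus at most E_Q[f log (f + 1)].  Applying ln t <= t - 1 at
   t = (f + 1)/(2 f) yields f log (f + 1) <= f log f + c + (1 - c) f with
   c = 1/(2 ln 2), which integrates to D(P_{Y|X=x} || Q_Y) + 1 because
   E_Q[f] = 1.  Since f log f >= -2, both sides stay bounded below and the
   bound can be integrated over P_X. *)

From HB Require Import structures.
From mathcomp Require Import all_boot all_order all_algebra.
From mathcomp Require Import all_classical all_reals all_analysis.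
From mathcomp Require Import measurable_realfun ring lra.
Import Order.TTheory GRing.Theory Num.Theory.
Local Open Scope classical_set_scope.
Local Open Scope ring_scope.

Section log2_inequalities.
Context {R : realType}.
Implicit Types x : R.

Lemma ln_le_subr1 x : 0 < x -> ln x <= x - 1.
Proof.
move=> x0; have := @le_ln1Dx R (x - 1).
by rewrite subrKC; apply; lra.
Qed.

Lemma ln2_gt0 : 0 < ln (2 : R).
Proof. by apply: ln_gt0; lra. Qed.

Lemma ln2_ge_half : 2^-1 <= ln (2 : R).
Proof. by have := ln_le_subr1 2^-1 ltac:(lra); rewrite lnV ?posrE //; lra. Qed.

Lemma log2_ge0 x : 1 <= x -> 0 <= log2 x.
Proof. by move=> x1; rewrite /log2 divr_ge0 ?ln_ge0 ?ler1n. Qed.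

Lemma measurable_log2 : measurable_fun setT (@log2 R).
Proof. by apply: measurable_funM => //; exact: measurable_ln. Qed.

Lemma mul_log2_ge x : 0 <= x -> -2 <= x * log2 x.
Proof.
move=> x0; have l2 := ln2_ge_half.
have [->|xn0] := eqVneq x 0; first by rewrite mul0r; lra.
have xp : 0 < x by rewrite lt_def xn0 x0.
have xlnx : x - 1 <= x * ln x.
  have := ler_wpM2l x0 (ln_le_subr1 x^-1 ltac:(by rewrite invr_gt0)).
  rewrite lnV ?posrE // mulrBr mulfV ?gt_eqF // mulr1 mulrN; lra.
rewrite /log2 mulrA -(@ler_pM2r _ (ln 2)) ?ln2_gt0 // mulfVK ?gt_eqF ?ln2_gt0 //.
lra.
Qed.

Definition inv_2ln2 : R := (2 * ln 2)^-1.

Lemma inv_2ln2_ge0 : 0 <= inv_2ln2.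
Proof. by rewrite invr_ge0 mulr_ge0 //; exact: ltW ln2_gt0. Qed.

Lemma inv_2ln2_le1 : inv_2ln2 <= 1.
Proof. by rewrite invf_le1 ?mulr_gt0 ?ln2_gt0 //; have := ln2_ge_half; lra. Qed.

(* [ln t <= t - 1] at [t = (x + 1) / (2 x)]; the factor 2 makes the bound
   tight at [x = 1], so that the additive constant is 1 and not [1 / ln 2]. *)
Lemma mul_log2D1_le x : 0 <= x ->
  x * log2 (x + 1) <= x * log2 x + (inv_2ln2 + (1 - inv_2ln2) * x).
Proof.
move=> x0; have l2 := ln2_gt0.
have [->|xn0] := eqVneq x 0.
  by rewrite !mul0r add0r mulr0 addr0 inv_2ln2_ge0.
have xp : 0 < x by rewrite lt_def xn0 x0.
have key : x * ln (x + 1) <= x * ln x + x * ln 2 + (1 - x) / 2.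
  have := ler_wpM2l x0 (ln_le_subr1 ((x + 1) / (2 * x)) ltac:(apply: divr_gt0; lra)).
  rewrite ln_div ?lnM ?posrE; try lra.
  have -> : x * ((x + 1) / (2 * x) - 1) = (1 - x) / 2 by field; lra.
  rewrite !mulrBr mulrDr; lra.
have -> : x * log2 x + (inv_2ln2 + (1 - inv_2ln2) * x)
    = (x * ln x + x * ln 2 + (1 - x) / 2) / ln 2.
  by rewrite /log2 /inv_2ln2; field; lra.
by rewrite /log2 mulrA ler_pM2r ?invr_gt0.
Qed.

End log2_inequalities.

Section geometric_log_moment.
Variable R : realType.
Variable p : R.
Hypotheses (p_gt0 : 0 < p) (p_le1 : p <= 1).

Lemma geom_term_ge0 k : (1 <= k)%N -> 0 <= (1 - p) ^+ k.-1 * p * log2 k%:R.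
Proof.
move=> k1; apply: mulr_ge0; last by rewrite log2_ge0 ?ler1n.
by rewrite mulr_ge0 ?exprn_ge0 ?subr_ge0 // ltW.
Qed.

(* Summing [ln k <= ln (1/p) + k p - 1], the tangent bound of [ln] at [1/p]. *)
Lemma geom_ln_partial_sum_le n :
  \sum_(1 <= k < n.+1) (1 - p) ^+ k.-1 * p * ln k%:R <=
  (1 - (1 - p) ^+ n) * ln p^-1 - n%:R * p * (1 - p) ^+ n.
Proof.
elim: n => [|n IH].
  by rewrite big_geq // expr0 subrr !mul0r subrr.
rewrite big_nat_recr //=.
have q0 : 0 <= (1 - p) ^+ n by rewrite exprn_ge0 // subr_ge0.
have ln_tangent : ln n.+1%:R <= ln p^-1 + n.+1%:R * p - 1.
  have := ln_le_subr1 _ (mulr_gt0 (ltr0Sn R n) p_gt0).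
  rewrite lnM ?posrE ?ltr0Sn // lnV ?posrE //; lra.
have -> : (1 - (1 - p) ^+ n.+1) * ln p^-1 - n.+1%:R * p * (1 - p) ^+ n.+1
   = ((1 - (1 - p) ^+ n) * ln p^-1 - n%:R * p * (1 - p) ^+ n)
     + (1 - p) ^+ n * p * (ln p^-1 + n.+1%:R * p - 1).
  by rewrite exprS -natr1; ring.
by apply: lerD => //; apply: ler_wpM2l => //; rewrite mulr_ge0 // ltW.
Qed.

Lemma geom_Elog_ge0 : (0 <= geom_Elog p)%E.
Proof. by apply: nneseries_ge0 => k k1 _; rewrite lee_fin geom_term_ge0. Qed.

Lemma geom_Elog_le_log2_inv : (geom_Elog p <= (log2 p^-1)%:E)%E.
Proof.
apply: lime_le.
  by apply: is_cvg_ereal_nneg_natsum => k k1; rewrite lee_fin geom_term_ge0.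
apply: nearW => -[|n]; rewrite sumEFin lee_fin.
  by rewrite big_geq // log2_ge0 // invf_ge1.
rewrite /log2; under eq_bigr do rewrite mulrA.
rewrite -mulr_suml ler_pM2r ?invr_gt0 ?ln2_gt0 //.
apply: (le_trans (geom_ln_partial_sum_le n)).
have q0 : 0 <= (1 - p) ^+ n by rewrite exprn_ge0 // subr_ge0.
have : 0 <= n%:R * p * (1 - p) ^+ n by rewrite !mulr_ge0 // ltW.
have : 0 <= (1 - p) ^+ n * ln p^-1 by rewrite mulr_ge0 // ln_ge0 // invf_ge1.
rewrite mulrBl mul1r; lra.
Qed.

End geometric_log_moment.

Section geom_Elog_invD1.
Context {R : realType}.
Implicit Types x : R.

Lemma invD1_gt0 x : 0 <= x -> 0 < (x + 1)^-1.
Proof. by move=> x0; rewrite invr_gt0; lra. Qed.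

Lemma invD1_le1 x : 0 <= x -> (x + 1)^-1 <= 1.
Proof. by move=> x0; rewrite invf_le1; lra. Qed.

Lemma geom_Elog_invD1_ge0 x : 0 <= x -> (0 <= geom_Elog (x + 1)^-1)%E.
Proof. by move=> x0; rewrite geom_Elog_ge0 ?invD1_gt0 ?invD1_le1. Qed.

Lemma geom_Elog_invD1_le x : 0 <= x -> (geom_Elog (x + 1)^-1 <= (log2 (x + 1))%:E)%E.
Proof.
move=> x0; rewrite -[in leRHS](invrK (x + 1)).
by rewrite geom_Elog_le_log2_inv ?invD1_gt0 ?invD1_le1.
Qed.

Lemma measurable_invD1_norm : measurable_fun setT (fun x : R => (`|x| + 1)^-1).
Proof.
apply: continuous_measurable_fun => x.
apply: cvgV; first by rewrite gt_eqF // ltr_wpDl.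
by apply: cvgD; [exact: norm_continuous | exact: cvg_cst].
Qed.

Lemma measurable_geom_Elog_invD1 d (T : measurableType d) (g : T -> R) :
  (forall t, 0 <= g t) -> measurable_fun setT g ->
  measurable_fun setT (fun t => geom_Elog (g t + 1)^-1).
Proof.
move=> g0 mg; pose p t := (g t + 1)^-1.
have mp : measurable_fun setT p.
  rewrite (_ : p = (fun x : R => (`|x| + 1)^-1) \o g).
    exact: measurableT_comp measurable_invD1_norm mg.
  by apply/funext => t; rewrite /p /= ger0_norm.
rewrite (_ : (fun t => geom_Elog (p t)) = fun t =>
    (\sum_(k <oo | k \in [pred k | (1 <= k)%N]) ((1 - p t) ^+ k.-1 * p t * log2 k%:R)%:E)%E).
  apply: ge0_emeasurable_sum => [k t _ k1|k _].
    by rewrite lee_fin geom_term_ge0 ?invD1_gt0 ?invD1_le1.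
  apply/measurable_EFinP; apply: measurable_funM => //.
  by apply: measurable_funM => //; exact/measurable_funX/measurable_funB.
apply/funext => t; rewrite /geom_Elog eseries_cond.
by apply: congr_lim; apply/funext => n; apply: eq_bigl => k; rewrite inE.
Qed.

End geom_Elog_invD1.

Local Open Scope ereal_scope.

Section bounded_below_integrals.
Context d (T : measurableType d) (R : realType) (P : probability T R).
Variables (M : R) (a : T -> \bar R).
Hypotheses (M_ge0 : (0 <= M)%R) (ma : measurable_fun setT a)
  (a_ge : forall x, (- M)%:E <= a x).

Lemma integral_cst_probability (r : \bar R) : \int[P]_x (cst r) x = r.
Proof.
rewrite integral_cst //.
set P1 := (X in _ * X); have -> : P1 = 1 by exact: probability_setT.
by rewrite mule1.
Qed.

Lemma integral_funeneg_le : \int[P]_x a^\- x <= M%:E.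
Proof.
rewrite -[leRHS](integral_cst_probability M%:E).
apply: ge0_le_integral => //; first exact: measurable_funeneg.
by move=> x _; rewrite funenegE /= ge_max lee_fin M_ge0 andbT leeNl.
Qed.

Lemma integral_funeneg_fin_num : \int[P]_x a^\- x \is a fin_num.
Proof.
rewrite ge0_fin_numE; last exact: integral_ge0.
exact: le_lt_trans integral_funeneg_le (ltry _).
Qed.

Lemma integral_ge_bound : (- M)%:E <= \int[P]_x a x.
Proof.
rewrite integralE EFinN -[leLHS]add0e.
by apply: leeD; [exact: integral_ge0 | rewrite leeN2 integral_funeneg_le].
Qed.

Lemma not_integrable_integral_pinfty :
  ~ P.-integrable setT a -> \int[P]_x a x = +oo.
Proof.
move=> nia; have aneg_fin := integral_funeneg_fin_num.
have apos_pinfty : \int[P]_x a^\+ x = +oo.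
  have abs_pinfty : \int[P]_x `|a x| = +oo.
    apply/eqP; rewrite eq_le leey /= leNgt; apply/negP => h.
    by apply: nia; apply/integrableP.
  move: abs_pinfty; rewrite (_ : (fun x => `|a x|) = a^\+ \+ a^\-); last first.
    by rewrite -fune_abse.
  rewrite ge0_integralD //; [|exact: measurable_funepos|exact: measurable_funeneg].
  by move: aneg_fin; case: (\int[P]_x a^\- x); case: (\int[P]_x a^\+ x).
by rewrite integralE apos_pinfty; move: aneg_fin; case: (\int[P]_x a^\- x).
Qed.

End bounded_below_integrals.
Arguments integral_cst_probability {d T R P}.
Arguments integral_ge_bound {d T R P M a}.
Arguments not_integrable_integral_pinfty {d T R P M a}.

Section ae_le_integral_bounded_below.
Context d (T : measurableType d) (R : realType) (P : probability T R).
Variables (L K : T -> \bar R) (M c : R).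
Hypotheses (M_ge0 : (0 <= M)%R) (c_ge0 : (0 <= c)%R)
  (mL : measurable_fun setT L) (mK : measurable_fun setT K)
  (L_ge0 : forall x, 0 <= L x) (K_ge : forall x, (- M)%:E <= K x).

Lemma ae_le_integral_bounded_below :
  {ae P, forall x, L x <= K x + c%:E} -> \int[P]_x L x <= \int[P]_x K x + c%:E.
Proof.
move=> LK.
have [iK|niK] := pselect (P.-integrable setT K); last first.
  by rewrite (not_integrable_integral_pinfty (a := K) M_ge0) // addye // leey.
have KMc_ge0 x : 0 <= K x + (M + c)%:E.
  move: (K_ge x); case: (K x) => [r h| |] //; last by rewrite addye.
  by rewrite -EFinD lee_fin addrA addr_ge0 // -[M]opprK subr_ge0 -lee_fin EFinN.
(* Shifting by [M] makes both integrands nonnegative. *)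
have shifted : \int[P]_x (L x + M%:E) <= \int[P]_x (K x + (M + c)%:E).
  apply: ae_ge0_le_integral => //.
  - by move=> x _; rewrite adde_ge0.
  - exact: emeasurable_funD.
  - exact: emeasurable_funD.
  apply: filterS LK => x LKx _.
  by rewrite EFinD addeA addeAC leeD2r.
rewrite ge0_integralD // integral_cst_probability in shifted.
rewrite integralD // ?integral_cst_probability in shifted; last first.
  exact: finite_measure_integrable_cst.
have Lint_ge0 : 0 <= \int[P]_x L x by apply: integral_ge0 => x _.
move: shifted Lint_ge0 (integrable_fin_num measurableT iK).
case: (\int[P]_x L x) => [l| |] //; case: (\int[P]_x K x) => [k| |] //.
by rewrite -!EFinD !lee_fin; lra.
Qed.

End ae_le_integral_bounded_below.
Arguments ae_le_integral_bounded_below {d T R P L K}.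

Section density.
Context d (T : measurableType d) (R : realType).
Variables (nu : {finite_measure set T -> \bar R})
  (mu : {sigma_finite_measure set T -> \bar R}) (g : T -> R).
Hypotheses (mg : measurable_fun setT g)
  (nu_dens : forall A, measurable A -> nu A = \int[mu]_(y in A) (g y)%:E).

Lemma integral_density (phi : T -> \bar R) :
  (forall y, 0 <= phi y) -> measurable_fun setT phi ->
  \int[nu]_y phi y = \int[mu]_y (phi y * (g y)%:E).
Proof.
move=> phi0 mphi.
have numu : nu `<< mu.
  apply/null_content_dominatesP => A mA muA.
  rewrite nu_dens // null_set_integral //.
  by apply/measurable_EFinP; exact: measurable_funTS.
rewrite -(Radon_Nikodym_SigmaFinite.change_of_variables numu phi0 measurableT mphi).
have iRN := Radon_Nikodym_SigmaFinite.f_integrable numu.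
have mRN := measurable_int _ iRN.
apply: ae_eq_integral => //.
- exact: emeasurable_funM.
- by apply: emeasurable_funM => //; exact/measurable_EFinP.
apply: ae_eqe_mul2l.
apply: integral_ae_eq => //; first exact/measurable_EFinP.
by move=> E _ mE; rewrite -Radon_Nikodym_SigmaFinite.f_integral // nu_dens.
Qed.

End density.
Arguments integral_density {d T R nu mu g}.

Section KL_bound.
Context d (Y : measurableType d) (R : realType) (nu mu : probability Y R).
Variable g : Y -> R.
Hypotheses (g_ge0 : forall y, (0 <= g y)%R) (mg : measurable_fun setT g)
  (nu_dens : forall A, measurable A -> nu A = \int[mu]_(y in A) (g y)%:E).

Lemma integral_density_probability : \int[mu]_y (g y)%:E = 1.
Proof. by rewrite -nu_dens // probability_setT. Qed.

Lemma integral_convex_comb_density (t : R) : (0 <= t <= 1)%R ->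
  \int[mu]_y (t + (1 - t) * g y)%:E = 1.
Proof.
case/andP => t0 t1.
under eq_integral do rewrite EFinD EFinM.
rewrite ge0_integralD //; last 2 first.
- by move=> y _; rewrite -EFinM lee_fin mulr_ge0 // subr_ge0.
- by apply: emeasurable_funM => //; exact/measurable_EFinP.
rewrite ge0_integralZl //; last 3 first.
- exact/measurable_EFinP.
- by move=> y _; rewrite lee_fin.
- by rewrite lee_fin subr_ge0.
by rewrite integral_density_probability mule1 integral_cst_probability -EFinD subrKC.
Qed.

Lemma integral_log2D1_le_KL : \int[nu]_y (log2 (g y + 1))%:E <= KL_dens mu g + 1.
Proof.
pose t : R := inv_2ln2.
pose a y := (g y * log2 (g y))%R.
pose c y := (t + (1 - t) * g y)%R.
have ma : measurable_fun setT a.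
  by apply: measurable_funM => //; exact: measurableT_comp measurable_log2 mg.
have mc : measurable_fun setT c by apply: measurable_funD => //; exact: measurable_funM.
rewrite (integral_density mg nu_dens); last 2 first.
- by move=> y; rewrite lee_fin log2_ge0 // lerDr.
- apply/measurable_EFinP; apply: measurableT_comp measurable_log2 _.
  exact: measurable_funD.
have -> : \int[mu]_y ((log2 (g y + 1))%:E * (g y)%:E) =
          \int[mu]_y (g y * log2 (g y + 1))%:E.
  by apply: eq_integral => y _; rewrite -EFinM mulrC.
apply: (@le_trans _ _ (\int[mu]_y (a y + c y)%:E)).
  apply: ge0_le_integral => //.
  - by move=> y _; rewrite lee_fin mulr_ge0 // log2_ge0 // lerDr.
  - apply/measurable_EFinP; apply: measurable_funM => //.
    by apply: measurableT_comp measurable_log2 _; exact: measurable_funD.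
  - by apply/measurable_EFinP; exact: measurable_funD.
  - by move=> y _; rewrite lee_fin; exact: mul_log2D1_le.
have c_int1 : \int[mu]_y (c y)%:E = 1.
  by apply: integral_convex_comb_density; rewrite inv_2ln2_ge0 inv_2ln2_le1.
have [ia|nia] := pselect (mu.-integrable setT (EFin \o a)).
  under eq_integral do rewrite EFinD.
  rewrite integralD //; first by apply: leeD => //; rewrite -[leRHS]c_int1.
  apply/integrableP; split; first exact/measurable_EFinP.
  under eq_integral do
    rewrite gee0_abs ?lee_fin ?addr_ge0 ?mulr_ge0 ?inv_2ln2_ge0 ?subr_ge0 ?inv_2ln2_le1 //.
  by rewrite c_int1 ltry.
have -> : KL_dens mu g = +oo.
  apply: (not_integrable_integral_pinfty (M := 2)) => //.
  - exact/measurable_EFinP.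
  - by move=> y; rewrite lee_fin mul_log2_ge.
by rewrite addye // leey.
Qed.

Lemma integral_geom_Elog_le_KL :
  \int[nu]_y geom_Elog (g y + 1)^-1 <= KL_dens mu g + 1.
Proof.
apply: le_trans integral_log2D1_le_KL.
apply: ge0_le_integral => //.
- by move=> y _; exact: geom_Elog_invD1_ge0.
- exact: measurable_geom_Elog_invD1.
- apply/measurable_EFinP; apply: measurableT_comp measurable_log2 _.
  exact: measurable_funD.
- by move=> y _; exact: geom_Elog_invD1_le.
Qed.

End KL_bound.
Arguments integral_geom_Elog_le_KL {d Y R nu mu g}.

(* The values of a probability kernel only carry a measure structure. *)
Section probability_kernel_measure.
Context d d' (X : measurableType d) (Y : measurableType d') (R : realType).
Variables (k : R.-pker X ~> Y) (x : X).

Definition pker_measure : set Y -> \bar R := k x.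
HB.instance Definition _ := Measure.on pker_measure.
HB.instance Definition _ :=
  Measure_isProbability.Build _ _ _ pker_measure (@prob_kernel _ _ _ _ _ k x).
End probability_kernel_measure.
Arguments pker_measure {d d' X Y R}.

Lemma measurable_KL_dens {d d'} {X : measurableType d} {Y : measurableType d'}
  {R : realType} (Q : {sigma_finite_measure set Y -> \bar R}) {f : X -> Y -> R} :
  measurable_fun setT (fun xy : X * Y => f xy.1 xy.2) ->
  measurable_fun setT (fun x => KL_dens Q (f x)).
Proof.
move=> mf; pose a xy := ((f xy.1 xy.2 * log2 (f xy.1 xy.2))%R)%:E.
have ma : measurable_fun setT a.
  apply/measurable_EFinP; apply: measurable_funM => //.
  exact: measurableT_comp measurable_log2 mf.
rewrite (_ : (fun x => _) = fun x => \int[Q]_y a^\+ (x, y) - \int[Q]_y a^\- (x, y)).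
  apply: emeasurable_funB.
  - exact: (measurable_fun_fubini_tonelli_F (m2 := Q) _
             (measurable_funepos ma) (funepos_ge0 _)).
  - exact: (measurable_fun_fubini_tonelli_F (m2 := Q) _
             (measurable_funeneg ma) (funeneg_ge0 _)).
apply/funext => x; rewrite /KL_dens integralE.
by congr (_ - _); apply: eq_integral => y _; rewrite ?funeposE ?funenegE.
Qed.

Theorem mainTheorem3 (R : realType) (d d' : measure_display)
  (X : measurableType d) (Y : measurableType d')
  (PX : probability X R) (PYX : R.-pker X ~> Y) (QY : probability Y R)
  (f : X -> Y -> R)
  (f_ge0 : forall x y, (0 <= f x y)%R)
  (f_meas : measurable_fun setT (fun xy : X * Y => f xy.1 xy.2))
  (f_dens : {ae PX, forall x, forall A, measurable A ->
              PYX x A = \int[QY]_(y in A) (f x y)%:E}) :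
  \int[PX]_x \int[PYX x]_y geom_Elog ((f x y + 1)^-1)%R
  <= \int[PX]_x KL_dens QY (f x) + 1.
Proof.
pose L x := \int[PYX x]_y geom_Elog (f x y + 1)^-1.
pose K x := KL_dens QY (f x).
have mfx x : measurable_fun setT (f x) := measurableT_comp f_meas (pair1_measurable x).
have mL : measurable_fun setT L.
  apply: (measurable_fun_integral_finite_kernel
           (fun xy => geom_Elog (f xy.1 xy.2 + 1)^-1) PYX).
  - by move=> xy; exact: geom_Elog_invD1_ge0.
  - by apply: measurable_geom_Elog_invD1 => // -[].
have L_ge0 x : 0 <= L x by apply: integral_ge0 => y _; exact: geom_Elog_invD1_ge0.
have K_ge x : (- 2%R)%:E <= K x.
  apply: integral_ge_bound => // [|y]; last by rewrite lee_fin mul_log2_ge.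
  apply/measurable_EFinP; apply: measurable_funM => //.
  exact: measurableT_comp measurable_log2 (mfx x).
have LK : {ae PX, forall x, L x <= K x + 1%:E}.
  apply: filterS f_dens => x dens.
  exact: (integral_geom_Elog_le_KL (nu := pker_measure PYX x) (f_ge0 x) (mfx x) dens).
exact: (ae_le_integral_bounded_below 2 1 (ler0n _ 2) ler01 mL
  (measurable_KL_dens QY f_meas) L_ge0 K_ge LK).
Qed.
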